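(* Let $n\geq 4$ and $m=\lfloor (n-2)/2\rfloor$. Let $G_m$ be the group generated by the maps in $\mathcal C_n$, acting on the set of all permutations of length $n$. Then every orbit of this action has size $2^m$, and for any orbit $A$, \[\sum_{p\in A} z^{\mathrm{run}(p)} = z^a(1+z)^m\] for some nonnegative integer $a$.
   Context: For a permutation $p=p_1p_2\cdots p_n$ and an index $i\in[2,n-1]$, $p$ changes direction at $i$ if $p_{i-1}<p_i>p_{i+1}$ or $p_{i-1}>p_i<p_{i+1}$; $\mathrm{run}(p)=k$ means $p$ changes direction exactly $k-1$ times (the number of alternating runs). For a string $s$ of distinct integers with underlying set $S$, its complement relative to $S$ is obtained by replacing, for each $j$, the $j$th smallest element of $S$ by the $j$th largest element of $S$. For $1\leq i\leq n$, $c_i$ is the map on permutations of length $n$ that leaves $p_1\cdots p_{i-1}$ unchanged and replaces $p_ip_{i+1}\cdots p_n$ by its complement relative to $\{p_i,\dots,p_n\}$. If $n$ is even, $\mathcal C_n=\{c_3,c_5,c_7,\dots,c_{n-1}\}$; if $n$ is odd, $\mathcal C_n=\{c_3,c_5,c_7,\dots,c_{n-2}\}$. In both cases $\mathcal C_n$ has $m=\lfloor (n-2)/2\rfloor$ elements, each an involution, pairwise commuting, so they generate a group $G_m\cong(\mathbb Z_2)^m$ acting on permutations of length $n$. *)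

From mathcomp Require Import all_boot all_order all_algebra all_fingroup.
Set Implicit Arguments. Unset Strict Implicit. Unset Printing Implicit Defensive.

(* A permutation p = p_1 ... p_n of length n is modelled as p : 'S_n, with
   p_i := val (p (i-1)) (0-based values; only relative order matters). *)

Definition pseq n (p : {ffun 'I_n -> 'I_n}) : seq nat := [seq val (p k) | k <- ord_enum n].

(* p_i for 1-based position i *)
Definition pat n (p : 'S_n) (i : nat) : nat := nth 0 (pseq (pval p)) i.-1.

Definition dirchange n (p : 'S_n) (i : nat) : bool :=
  ((pat p i.-1 < pat p i) && (pat p i > pat p i.+1)) ||
  ((pat p i.-1 > pat p i) && (pat p i < pat p i.+1)).

Definition run n (p : 'S_n) : nat := (count (dirchange p) (iota 2 (n - 2))).+1.

Definition tailvals n (f : {ffun 'I_n -> 'I_n}) (i : nat) : seq nat :=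
  sort leq (map (fun k : 'I_n => val (f k)) (filter (fun k : 'I_n => i <= k.+1) (ord_enum n))).

(* complement of the suffix p_i ... p_n relative to its underlying set:
   the j-th smallest element (0-based rank r) is replaced by the j-th largest
   (0-based rank size-1-r). *)
Definition compl_suffix n (i : nat) (f : {ffun 'I_n -> 'I_n}) : {ffun 'I_n -> 'I_n} :=
  [ffun j : 'I_n => if i <= j.+1 then
     let s := tailvals f i in
     insubd (f j) (nth 0 s ((size s).-1 - index (val (f j)) s))
   else f j].

(* the map c_i on permutations of length n (the result is always a permutation;
   insubd only provides a default to make the definition total) *)
Definition cmap n (i : nat) (p : 'S_n) : 'S_n := insubd p (compl_suffix i (pval p)).

Definition Cidx (n i : nat) : bool :=
  [&& odd i, 3 <= i & i <= (if odd n then n - 2 else n - 1)].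

Definition gstep n : rel 'S_n :=
  fun p q => [exists i : 'I_n.+1, Cidx n i && (q == cmap i p)].

(* orbit of p under the group generated by C_n (words in the generators) *)
Definition Gorbit n (p : 'S_n) : {set 'S_n} := [set q | connect (@gstep n) p q].

From mathcomp Require Import all_boot all_order all_algebra all_fingroup.
From mathcomp Require Import zify ring.
Set Implicit Arguments. Unset Strict Implicit. Unset Printing Implicit Defensive.
Import GRing.Theory.

(* The map c_t fixes p_1 ... p_(t-1) and reverses the relative order of
   p_t ... p_n; since these two data determine a permutation, the c_t are
   commuting involutions, and the orbit of p is listed by deciding, for
   i = 3, 5, 7, ..., whether to apply c_i.  The 2^m resulting permutations are
   distinct: c_i reverses the order of the entries at positions i and i+1,
   which the later generators c_j (j >= i+2) do not touch.  Applying c_i only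
   changes the direction changes at positions i-1 and i, where their number
   goes up or down by exactly one, and which way depends only on
   p_1 ... p_(i+1), a prefix shared by the whole orbit of the later
   generators.  So each generator splits the orbit into two halves whose run
   polynomials differ by a factor z, contributing a factor 1 + z. *)

Lemma sorted_ltn_nthE (s : seq nat) i j : sorted ltn s ->
  i < size s -> j < size s -> (nth 0 s i < nth 0 s j) = (i < j).
Proof.
move=> ss ilt jlt; have homo := sorted_ltn_nth ltn_trans 0 ss.
case: (ltngtP i j) => [ij|ji|->]; first exact: homo.
  by apply/negbTE; rewrite -leqNgt ltnW // homo.
by rewrite ltnn.
Qed.

Definition mirror (s : seq nat) (x : nat) := nth 0 s ((size s).-1 - index x s).

Lemma mem_mirror s x : x \in s -> mirror s x \in s.
Proof. by case: s => // y s xs; rewrite mem_nth //= ltnS leq_subr. Qed.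

Lemma mirror_ltE s (x y : nat) : sorted ltn s -> x \in s -> y \in s ->
  (mirror s x < mirror s y) = (y < x).
Proof.
move=> ss xs ys.
have ix : index x s < size s by rewrite index_mem.
have iy : index y s < size s by rewrite index_mem.
rewrite /mirror -{2}(nth_index 0 xs) -{2}(nth_index 0 ys) !sorted_ltn_nthE //;
  [apply/idP/idP|..]; lia.
Qed.

Section SuffixComplement.
Variable n : nat.
Implicit Types (p q : 'S_n) (t : nat).

Lemma tailvals_sorted p t : sorted ltn (tailvals (pval p) t).
Proof.
rewrite ltn_sorted_uniq_leq sort_uniq sort_sorted ?andbT; last exact: leq_total.
rewrite map_inj_uniq ?filter_uniq ?ord_enum_uniq // => a b /val_inj.
by rewrite pvalE => /perm_inj.
Qed.

Lemma mem_tailvals p t (v : 'I_n) :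
  (val v \in tailvals (pval p) t) = (t <= ((p^-1)%g v).+1).
Proof.
rewrite mem_sort; apply/mapP/idP => [[k]|vt].
  by rewrite mem_filter mem_ord_enum andbT pvalE => kt /val_inj ->; rewrite permK.
exists ((p^-1)%g v); first by rewrite mem_filter mem_ord_enum andbT.
by rewrite pvalE permKV.
Qed.

Lemma tailvals_ltn p t x : x \in tailvals (pval p) t -> x < n.
Proof. by rewrite mem_sort => /mapP[k _ ->]; apply: ltn_ord. Qed.

Lemma mem_tailvals_suffix p t (k : 'I_n) : t <= k.+1 -> val (p k) \in tailvals (pval p) t.
Proof. by rewrite mem_tailvals permK. Qed.

Lemma compl_suffixE p t (k : 'I_n) : val (compl_suffix t (pval p) k) =
  if t <= k.+1 then mirror (tailvals (pval p) t) (p k) else p k.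
Proof.
rewrite ffunE pvalE; case: ifP => // kt.
by rewrite val_insubd (tailvals_ltn (mem_mirror (mem_tailvals_suffix p kt))).
Qed.

Lemma compl_suffix_inj p t : injective (compl_suffix t (pval p)).
Proof.
move=> k l /(congr1 val); rewrite !compl_suffixE.
have mirror_ltE_suffix (a b : 'I_n) : t <= a.+1 -> t <= b.+1 ->
    (mirror (tailvals (pval p) t) (p a) < mirror (tailvals (pval p) t) (p b)) = (p b < p a).
  by move=> ??; rewrite mirror_ltE ?tailvals_sorted ?mem_tailvals_suffix.
have mirror_mem (a : 'I_n) : t <= a.+1 ->
    mirror (tailvals (pval p) t) (p a) \in tailvals (pval p) t.
  by move=> ?; rewrite mem_mirror ?mem_tailvals_suffix.
case: ifP => kt; case: ifP => lt.
- move=> e; apply: (@perm_inj _ p); apply/val_inj/eqP.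
  rewrite eqn_leq (leqNgt (p k)) (leqNgt (p l)).
  by rewrite -(mirror_ltE_suffix k l) // -(mirror_ltE_suffix l k) // e ltnn.
- by move=> e; have := mirror_mem _ kt; rewrite e mem_tailvals permK lt.
- by move=> e; have := mirror_mem _ lt; rewrite -e mem_tailvals permK kt.
- by move/val_inj/perm_inj.
Qed.

Lemma cmapE p t (k : 'I_n) : val (cmap t p k) =
  if t <= k.+1 then mirror (tailvals (pval p) t) (p k) else p k.
Proof.
rewrite -compl_suffixE /cmap -pvalE val_insubd.
by case: injectiveP => // [[]]; apply: compl_suffix_inj.
Qed.

Lemma cmap_prefix p t (k : 'I_n) : k.+1 < t -> cmap t p k = p k.
Proof. by move=> kt; apply: val_inj; rewrite cmapE leqNgt kt. Qed.

Lemma cmap_ltE p t (k l : 'I_n) : t <= k.+1 -> t <= l.+1 ->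
  (cmap t p k < cmap t p l) = (p l < p k).
Proof.
by move=> kt lt; rewrite !cmapE kt lt mirror_ltE ?tailvals_sorted ?mem_tailvals_suffix.
Qed.

Definition same_prefix t p q := forall k : 'I_n, k.+1 < t -> p k = q k.

Lemma same_prefix_sym t p q : same_prefix t p q -> same_prefix t q p.
Proof. by move=> e k kt; rewrite e. Qed.

Lemma same_prefix_trans t p q r :
  same_prefix t p q -> same_prefix t q r -> same_prefix t p r.
Proof. by move=> e1 e2 k kt; rewrite e1 ?e2. Qed.

Lemma same_prefixW s t p q : s <= t -> same_prefix t p q -> same_prefix s p q.
Proof. by move=> st e k ks; rewrite e // (leq_trans ks st). Qed.

Lemma cmap_same_prefix t p : same_prefix t (cmap t p) p.
Proof. exact: cmap_prefix. Qed.

Lemma same_prefix_suffixE t p q (v : 'I_n) : same_prefix t p q ->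
  (t <= ((p^-1)%g v).+1) = (t <= ((q^-1)%g v).+1).
Proof.
have invE r r' : same_prefix t r r' -> ((r^-1)%g v).+1 < t -> (r'^-1)%g v = (r^-1)%g v.
  by move=> e vt; apply: (@perm_inj _ r'); rewrite permKV -e ?permKV.
move=> e; rewrite [LHS]leqNgt [RHS]leqNgt; congr (~~ _); apply/idP/idP => vt.
  by rewrite (invE p q).
by rewrite (invE q p (same_prefix_sym e) vt).
Qed.

Lemma tailvals_same_prefix t p q : same_prefix t p q ->
  tailvals (pval p) t = tailvals (pval q) t.
Proof.
move=> e; apply: (irr_sorted_eq ltn_trans ltnn); rewrite ?tailvals_sorted // => x.
case: (ltnP x n) => [xn|nx]; first by rewrite -[x]/(val (Ordinal xn)) !mem_tailvals
  (same_prefix_suffixE _ e).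
by apply/idP/idP => /tailvals_ltn; rewrite ltnNge nx.
Qed.

Lemma same_prefix_cmap s t p q : t <= s -> same_prefix s p q ->
  same_prefix s (cmap t p) (cmap t q).
Proof.
move=> ts e k ks; apply: val_inj.
by rewrite !cmapE (tailvals_same_prefix (same_prefixW ts e)) e.
Qed.

(* [p k] and [q k] have the same rank among the common suffix values of [p]
   and [q], so neither can be smaller than the other. *)
Lemma perm_le_prefix_order t p q (k : 'I_n) : same_prefix t p q ->
  (forall a b : 'I_n, t <= a.+1 -> t <= b.+1 -> (p a < p b) = (q a < q b)) ->
  t <= k.+1 -> p k <= q k.
Proof.
move=> e ord kt; rewrite leqNgt; apply/negP => qk_lt_pk.
pose below (r : 'S_n) x := [set v : 'I_n | (v < x) && (t <= ((r^-1)%g v).+1)].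
have below_rank (r : 'S_n) : #|below r (r k)| = #|[set a : 'I_n | (r a < r k) && (t <= a.+1)]|.
  rewrite -[RHS](card_imset _ (@perm_inj _ r)); apply: eq_card => v; rewrite inE.
  apply/andP/imsetP => [[vk vt]|[a]]; last first.
    by rewrite inE => /andP[ak ta] ->; rewrite permK.
  by exists ((r^-1)%g v); rewrite ?inE ?permKV ?vk.
have below_pq : #|below p (p k)| = #|below p (q k)|.
  have -> : below p (q k) = below q (q k).
    by apply/setP => v; rewrite !inE (same_prefix_suffixE _ e).
  rewrite !below_rank; apply: eq_card => a; rewrite !inE.
  by case: (leqP t a.+1) => ta; rewrite ?andbF ?andbT // ord.
have: below p (q k) \proper below p (p k).
  rewrite properE; apply/andP; split.
    by apply/subsetP => v; rewrite !inE => /andP[vq ->]; rewrite (ltn_trans vq).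
  apply/subsetPn; exists (q k); rewrite !inE ?ltnn ?qk_lt_pk //.
  by rewrite (same_prefix_suffixE _ e) permK.
by move/proper_card; rewrite below_pq ltnn.
Qed.

Lemma perm_eq_prefix_order t p q : same_prefix t p q ->
  (forall a b : 'I_n, t <= a.+1 -> t <= b.+1 -> (p a < p b) = (q a < q b)) ->
  p = q.
Proof.
move=> e ord; apply/permP => k; apply: val_inj.
case: (leqP t k.+1) => kt; last by rewrite e.
have ord' (a b : 'I_n) : t <= a.+1 -> t <= b.+1 -> (q a < q b) = (p a < p b).
  by move=> ta tb; rewrite ord.
apply/eqP; rewrite eqn_leq (perm_le_prefix_order e ord kt).
exact: perm_le_prefix_order (same_prefix_sym e) ord' kt.
Qed.

Lemma cmapK t : involutive (@cmap n t).
Proof.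
move=> p; apply: (perm_eq_prefix_order (t := t)).
  exact: same_prefix_trans (cmap_same_prefix _) (cmap_same_prefix _).
by move=> a b ta tb; rewrite !cmap_ltE.
Qed.

Lemma cmapC i j p : cmap i (cmap j p) = cmap j (cmap i p).
Proof.
wlog ij : i j / i <= j.
  by move=> sym; case: (leqP i j) => [|/ltnW] h; [|symmetry]; apply: sym.
apply: (perm_eq_prefix_order (t := j)).
  apply: same_prefix_trans (same_prefix_sym (cmap_same_prefix _)).
  exact: same_prefix_cmap ij (cmap_same_prefix _).
move=> a b aj bj; have ai := leq_trans ij aj; have bi := leq_trans ij bj.
by rewrite !cmap_ltE.
Qed.

End SuffixComplement.

Section Runs.
Variable n : nat.
Implicit Types (p q : 'S_n) (x : nat).

Lemma pat_ord p (k : 'I_n) : pat p k.+1 = p k.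
Proof.
have size_enum : size (ord_enum n) = n by rewrite -(size_map val) val_ord_enum size_iota.
have nth_enum : nth k (ord_enum n) k = k.
  by apply: val_inj; rewrite -(nth_map k (val k)) ?size_enum // val_ord_enum nth_iota.
by rewrite /pat /pseq /= (nth_map k) ?size_enum // nth_enum pvalE.
Qed.

Lemma pos_ordP x : 0 < x <= n -> exists k : 'I_n, x = k.+1.
Proof. by case: x => // x xn; exists (Ordinal xn). Qed.

Lemma pat_default p x : n < x -> pat p x = 0.
Proof.
by move=> nx; rewrite /pat nth_default // size_map -(size_map val) val_ord_enum size_iota; lia.
Qed.

Lemma pat_same_prefix t p q x : same_prefix t p q -> 0 < x < t -> pat p x = pat q x.
Proof.
move=> e x_range; case: (leqP x n) => [xn|nx]; last by rewrite !pat_default.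
have [k xk] : exists k : 'I_n, x = k.+1 by apply: pos_ordP; lia.
by rewrite xk !pat_ord e -?xk; lia.
Qed.

Lemma pat_cmap_ltE t p x y : 0 < t -> t <= x <= n -> t <= y <= n ->
  (pat (cmap t p) x < pat (cmap t p) y) = (pat p y < pat p x).
Proof.
move=> t0 x_range y_range.
have [k xk] : exists k : 'I_n, x = k.+1 by apply: pos_ordP; lia.
have [l yl] : exists l : 'I_n, y = l.+1 by apply: pos_ordP; lia.
by rewrite xk yl !pat_ord cmap_ltE -?xk -?yl; lia.
Qed.

Lemma pat_gtE p x y : 0 < x <= n -> 0 < y <= n -> x != y ->
  (pat p y < pat p x) = ~~ (pat p x < pat p y).
Proof.
move=> /pos_ordP[k ->] /pos_ordP[l ->] kl; rewrite !pat_ord ltnNge leq_eqVlt.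
suff /negbTE -> : val (p k) != val (p l) by [].
by apply: contra kl => /eqP/val_inj/perm_inj ->.
Qed.

Definition asc p x := pat p x < pat p x.+1.

Lemma dirchangeE p x : 1 < x < n -> dirchange p x = asc p x.-1 (+) asc p x.
Proof.
move=> /andP[x1 xn]; rewrite /dirchange /asc prednK ?(ltn_trans _ x1) //.
rewrite (pat_gtE p (x := x.-1) (y := x)) ?(pat_gtE p (x := x) (y := x.+1));
  [by case: (pat p x.-1 < pat p x); case: (pat p x < pat p x.+1)|lia..].
Qed.

Lemma asc_cmap_prefix t p x : 0 < x -> x.+1 < t -> asc (cmap t p) x = asc p x.
Proof.
move=> x0 xt; rewrite /asc !(pat_same_prefix (cmap_same_prefix _)) //; lia.
Qed.

Lemma asc_cmap_suffix t p x : 0 < t <= x -> x < n -> asc (cmap t p) x = ~~ asc p x.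
Proof.
move=> /andP[t0 tx] xn; rewrite /asc pat_cmap_ltE ?(pat_gtE p (x := x)); lia.
Qed.

Definition window_changes p i := dirchange p i.-1 + dirchange p i.

Lemma run_window p i : 3 <= i < n -> run p =
  (count (dirchange p) (iota 2 (i - 3) ++ iota i.+1 (n - i.+1)) + window_changes p i).+1.
Proof.
move=> i_range; rewrite /run count_cat /window_changes.
have -> : n - 2 = (i - 3) + (2 + (n - i.+1)) by lia.
rewrite iotaD iotaD !count_cat /=.
have -> : 2 + (i - 3) = i.-1 by lia.
have -> : i.-1 + 2 = i.+1 by lia.
rewrite prednK; lia.
Qed.

Lemma run_cmap p i : 3 <= i < n ->
  run (cmap i p) + window_changes p i = run p + window_changes (cmap i p) i.
Proof.
move=> i_range; rewrite !(run_window _ i_range).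
have -> : count (dirchange (cmap i p)) (iota 2 (i - 3) ++ iota i.+1 (n - i.+1)) =
          count (dirchange p) (iota 2 (i - 3) ++ iota i.+1 (n - i.+1)).
  apply: eq_in_count => x; rewrite mem_cat !mem_iota => x_range.
  rewrite !dirchangeE; try lia.
  case/orP: x_range => x_range.
    by rewrite !asc_cmap_prefix //; lia.
  by rewrite !asc_cmap_suffix ?addbN ?addNb ?negbK //; lia.
lia.
Qed.

(* With [a, b, c] the ascents of [p] at [i-2, i-1, i], the counts are
   [(a (+) b) + (b (+) c)] and [(a (+) b') + (b' (+) ~~ c)] for some [b']: they
   lie in [0, 2] and have opposite parities. *)
Lemma window_changes_cmap p i : 3 <= i < n ->
  window_changes (cmap i p) i = (window_changes p i).+1 \/
  window_changes p i = (window_changes (cmap i p) i).+1.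
Proof.
move=> i_range; rewrite /window_changes !dirchangeE; try lia.
rewrite asc_cmap_prefix ?(asc_cmap_suffix p (x := i)); [|lia..].
case: (asc p i.-1.-1) (asc p i.-1) (asc p i) (asc (cmap i p) i.-1) => [] [] [] [] /=;
  by [left | right].
Qed.

Lemma run_cmap_step p i : 3 <= i < n ->
  run (cmap i p) = (run p).+1 \/ run p = (run (cmap i p)).+1.
Proof. by move=> i_range; have := run_cmap p i_range; case: (window_changes_cmap p i_range); lia. Qed.

Lemma window_changes_same_prefix p q i : 3 <= i -> same_prefix i.+2 p q ->
  window_changes p i = window_changes q i.
Proof.
move=> i3 e; rewrite /window_changes /dirchange.
by rewrite !(pat_same_prefix e) //; lia.
Qed.

Lemma run_cmap_same_prefix p q i : 3 <= i < n -> same_prefix i.+2 q p ->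
  run (cmap i q) + run p = run q + run (cmap i p).
Proof.
move=> i_range e; have := run_cmap q i_range; have := run_cmap p i_range.
rewrite (window_changes_same_prefix _ e) ?(window_changes_same_prefix _ (same_prefix_cmap _ e));
  lia.
Qed.

End Runs.

Section OrbitSeq.
Variable n : nat.
Implicit Types (p q : 'S_n) (l : seq nat).

Fixpoint orbit_seq p l : seq 'S_n :=
  if l is i :: l' then orbit_seq p l' ++ orbit_seq (cmap i p) l' else [:: p].

Lemma size_orbit_seq p l : size (orbit_seq p l) = 2 ^ size l.
Proof. by elim: l p => //= i l IHl p; rewrite size_cat !IHl expnS mul2n addnn. Qed.

Lemma orbit_seq_self p l : p \in orbit_seq p l.
Proof. by elim: l => [|i l IHl] /=; rewrite ?mem_cat ?IHl ?mem_seq1. Qed.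

Lemma orbit_seq_cmap i p l : orbit_seq (cmap i p) l = map (cmap i) (orbit_seq p l).
Proof. by elim: l p => //= j l IHl p; rewrite map_cat -!IHl cmapC. Qed.

Lemma orbit_seq_cmap_closed i p l q : i \in l -> q \in orbit_seq p l ->
  cmap i q \in orbit_seq p l.
Proof.
elim: l p => //= j l IHl p; rewrite inE !mem_cat => /orP[/eqP <-|il] /orP[qp|qip].
- by rewrite orbit_seq_cmap map_f ?orbT.
- by rewrite -[p in orbit_seq p](cmapK i) orbit_seq_cmap map_f.
- by rewrite IHl.
- by rewrite (IHl (cmap j p)) ?orbT.
Qed.

Lemma orbit_seq_same_prefix t p l q : all (fun i => t <= i) l ->
  q \in orbit_seq p l -> same_prefix t q p.
Proof.
elim: l p => [|i l IHl] p /=; first by rewrite mem_seq1 => _ /eqP ->.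
case/andP=> ti tl; rewrite mem_cat => /orP[|/(IHl _ tl) e]; first exact: IHl.
exact: same_prefix_trans e (same_prefixW ti (cmap_same_prefix _)).
Qed.

Lemma cmap_not_same_prefix p i : 0 < i < n -> ~ same_prefix i.+2 (cmap i p) p.
Proof.
case/andP=> i0 lt_in e.
have ltn_pred_in : i.-1 < n by lia.
pose a := Ordinal ltn_pred_in; pose b := Ordinal lt_in.
have := cmap_ltE p (t := i) (k := a) (l := b); rewrite /= prednK // !e /=; [|lia..].
move=> /(_ (leqnn i) (leqnSn i)); case: (ltngtP (p a) (p b)) => // /val_inj/perm_inj.
by move/(congr1 val) => /=; lia.
Qed.

Lemma uniq_orbit_seq p l : all (fun i => 0 < i < n) l ->
  pairwise (fun i j => i.+2 <= j) l -> uniq (orbit_seq p l).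
Proof.
elim: l p => //= i l IHl p /andP[i_range l_range] /andP[il l_spaced].
rewrite cat_uniq !IHl //= andbT; apply/hasPn => q qi; apply/negP => qp.
case: (cmap_not_same_prefix (p := p) i_range).
exact: same_prefix_trans (same_prefix_sym (orbit_seq_same_prefix il qi))
  (orbit_seq_same_prefix il qp).
Qed.

Lemma Cidx_range i : Cidx n i -> 3 <= i < n.
Proof. by rewrite /Cidx; case: (odd n) => /and3P[]; lia. Qed.

Lemma gstep_cmap i p : Cidx n i -> gstep p (cmap i p).
Proof.
move=> ci; have lt_in1 : i < n.+1 by have := Cidx_range ci; lia.
by apply/existsP; exists (Ordinal lt_in1); rewrite ci eqxx.
Qed.

Lemma connect_orbit_seq p l q : all (Cidx n) l -> q \in orbit_seq p l ->
  connect (@gstep n) p q.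
Proof.
elim: l p => [|i l IHl] p /=; first by rewrite mem_seq1 => _ /eqP ->.
case/andP=> ci cl; rewrite mem_cat => /orP[|/(IHl _ cl)]; first exact: IHl.
exact/connect_trans/connect1/gstep_cmap.
Qed.

End OrbitSeq.

Section RunPolynomial.
Variable n : nat.
Implicit Types (p q : 'S_n) (l : seq nat).
Local Open Scope ring_scope.

Definition run_poly (s : seq 'S_n) : {poly int} := \sum_(q <- s) 'X^(run q).

Lemma run_poly_orbit_cmap p i l : (3 <= i < n)%N -> all (fun j => i.+2 <= j)%N l ->
  run (cmap i p) = (run p).+1 ->
  run_poly (orbit_seq (cmap i p) l) = 'X * run_poly (orbit_seq p l).
Proof.
move=> i_range il run_ip; rewrite /run_poly orbit_seq_cmap big_map mulr_sumr.
apply: eq_big_seq => q qp; rewrite -exprS; congr ('X^_).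
have := run_cmap_same_prefix i_range (orbit_seq_same_prefix il qp); lia.
Qed.

Lemma run_poly_orbit_seq p l : all (fun i => 3 <= i < n)%N l ->
  pairwise (fun i j => i.+2 <= j)%N l ->
  exists a, run_poly (orbit_seq p l) = 'X^a * (1 + 'X) ^+ size l.
Proof.
elim: l p => [|i l IHl] p /=; first by exists (run p); rewrite /run_poly big_seq1 mulr1.
case/andP=> i_range l_range /andP[il l_spaced].
rewrite /run_poly big_cat /= -!/(run_poly _) exprS.
case: (run_cmap_step p i_range) => run_ip.
  have [a Ha] := IHl p l_range l_spaced.
  by exists a; rewrite run_poly_orbit_cmap // Ha; ring.
have [a Ha] := IHl (cmap i p) l_range l_spaced.
exists a; rewrite -[p in run_poly (orbit_seq p l)](cmapK i) run_poly_orbit_cmap ?cmapK //.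
by rewrite Ha; ring.
Qed.

End RunPolynomial.

Section Generators.
Variable n : nat.

Definition cidx_seq := [seq k.*2.+3 | k <- iota 0 ((n - 2) %/ 2)].

Lemma size_cidx_seq : size cidx_seq = (n - 2) %/ 2.
Proof. by rewrite size_map size_iota. Qed.

Lemma mem_cidx_seq i : (i \in cidx_seq) = Cidx n i.
Proof.
rewrite /Cidx; have n_mod2 := modn2 n; apply/mapP/idP => [[k]|/and3P[odd_i i3 i_le]].
  rewrite mem_iota add0n => /andP[_ k_lt] ->.
  by rewrite /= odd_double -!mul2n; case: (odd n) n_mod2 => /= n_mod2; lia.
have i_mod2 := modn2 i; rewrite odd_i in i_mod2.
exists ((i - 3) %/ 2); last by rewrite -mul2n; lia.
by rewrite mem_iota add0n; case: (odd n) n_mod2 i_le => /= n_mod2 i_le; lia.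
Qed.

Lemma cidx_seq_range : all (fun i => 3 <= i < n) cidx_seq.
Proof. by apply/allP => i; rewrite mem_cidx_seq => /Cidx_range. Qed.

Lemma cidx_seq_spaced : pairwise (fun i j => i.+2 <= j) cidx_seq.
Proof.
rewrite pairwise_map; apply: (@sub_pairwise _ ltn).
  by move=> a b /= ab; rewrite -!mul2n; lia.
by rewrite -(sorted_pairwise ltn_trans) iota_ltn_sorted.
Qed.

Lemma Gorbit_orbit_seq (p : 'S_n) : Gorbit p = [set q in orbit_seq p cidx_seq].
Proof.
apply/setP => q; rewrite !inE; apply/idP/idP; last first.
  by apply: connect_orbit_seq; apply/allP => i; rewrite mem_cidx_seq.
move/(closed_connect _) <-; first exact: orbit_seq_self.
move=> r r' /existsP[j /andP[cj /eqP ->]]; rewrite -mem_cidx_seq in cj.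
by apply/idP/idP; [|rewrite -{2}(cmapK j r)]; apply: orbit_seq_cmap_closed.
Qed.

End Generators.

Local Open Scope ring_scope.

Theorem mainTheorem3 (n : nat) (p : 'S_n) :
  (4 <= n)%N ->
  #|Gorbit p| = (2 ^ ((n - 2) %/ 2))%N /\
  exists a : nat,
    \sum_(q in Gorbit p) 'X^(run q) = 'X^a * (1 + 'X) ^+ ((n - 2) %/ 2) :> {poly int}.
Proof.
(* Not needed: for n < 4 there are no generators and the orbit is [set p]. *)
move=> _; rewrite Gorbit_orbit_seq -size_cidx_seq.
have uniq_orbit : uniq (orbit_seq p (cidx_seq n)).
  apply: uniq_orbit_seq (cidx_seq_spaced n).
  by apply: sub_all (cidx_seq_range n) => i /andP[/ltnW/ltnW -> ->].
split; first by rewrite cardsE (card_uniqP uniq_orbit) size_orbit_seq.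
have [a Ha] := run_poly_orbit_seq p (cidx_seq_range n) (cidx_seq_spaced n).
by exists a; rewrite -Ha /run_poly big_uniq //; apply: eq_bigl => q; rewrite inE.
Qed.
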